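(* Suppose $I$ is a stable matching instance with $k$-range preferences and $n$ men and $n$ women, and $\mathcal{R} = \mathcal{R}(I)$ is its rotation poset. Then the pathwidth of $\mathcal{R}$ is at most $50k^2$.
   Context: An SM instance $I$ has men and women with complete strict preference lists; $P_a(b)$ is the rank $a$ assigns $b$. For an agent $a$, $\min\mathrm{rank}(a)$ and $\max\mathrm{rank}(a)$ are the minimum and maximum of $P_b(a)$ over agents $b$ of the opposite sex; $I$ has $k$-range preferences if $\max\mathrm{rank}(a) - \min\mathrm{rank}(a) \leq k-1$ for all $a$. The rotation poset $\mathcal{R}(I)$ is the poset on the rotations of $I$ whose downsets correspond one-to-one with the stable matchings of $I$. A path decomposition of a graph $G=(V,E)$ is a sequence $(X_1,\ldots,X_r)$ of subsets of $V$ covering $V$ such that every edge lies in some $X_i$ and $X_i\cap X_k\subseteq X_j$ for $i\le j\le k$; its width is $\max_i|X_i|-1$, and the pathwidth of $G$ is the minimum width. The pathwidth of a poset is the pathwidth of the undirected version of its Hasse diagram. *)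

From mathcomp Require Import all_boot perm.
Set Implicit Arguments. Unset Strict Implicit. Unset Printing Implicit Defensive.

(* Preferences are complete and strict: the rank P_m(w) that man m gives
   woman w is [pm m w] (a permutation of 'I_n, i.e. ranks 0..n-1; lower is
   better), and the rank P_w(m) that woman w gives man m is [pw w m].
   (Ranks 0..n-1 instead of 1..n: all rank differences are unchanged.)      *)

Section SM.
Variable n : nat.
Variables (pm : 'I_n -> {perm 'I_n}) (pw : 'I_n -> {perm 'I_n}).

Definition PM (m w : 'I_n) : nat := pm m w.
Definition PW (w m : 'I_n) : nat := pw w m.

(* k-range preferences: for every agent a, maxrank(a) - minrank(a) <= k-1,
   i.e. any two ranks assigned to a differ by less than k. *)
Definition k_range (k : nat) : Prop :=
  (forall w m1 m2 : 'I_n, PM m1 w < PM m2 w + k) /\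
  (forall m w1 w2 : 'I_n, PW w1 m < PW w2 m + k).

Definition husband (M : {perm 'I_n}) (w : 'I_n) : 'I_n := (M^-1)%g w.

Definition stable (M : {perm 'I_n}) : bool :=
  [forall m, forall w, ~~ ((PM m w < PM m (M m)) && (PW w m < PW w (husband M w)))].

Definition wprefers (M : {perm 'I_n}) (w m : 'I_n) : bool :=
  PW w m < PW w (husband M w).

Definition next (M : {perm 'I_n}) (m w : 'I_n) : bool :=
  [&& PM m (M m) < PM m w, wprefers M w m &
      [forall w', ((PM m (M m) < PM m w') && (PM m w' < PM m w)) ==>
                  ~~ wprefers M w' m]].

(* A rotation is identified with its set of pairs {(m_i, w_i)}: it is exposed
   in some stable matching M, i.e. there is a cyclic sequence of distinct men
   m_0,...,m_{r-1} with w_i = M(m_i) and s_M(m_i) = w_{i+1 mod r}. *)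
Definition is_rotation (R : {set 'I_n * 'I_n}) : Prop :=
  exists M : {perm 'I_n}, stable M /\
  exists ms : seq 'I_n,
    [/\ ms != [::], uniq ms,
        R = [set (m, M m) | m in ms] &
        path.cycle (fun a b => next M a (M b)) ms].

Definition eliminated (M : {perm 'I_n}) (R : {set 'I_n * 'I_n}) : bool :=
  [exists p in R, PM p.1 p.2 < PM p.1 (M p.1)].

(* The rotation poset: R1 <= R2 iff every stable matching in which R2 has been
   eliminated also has R1 eliminated (so that downsets of the poset are exactly
   the sets of eliminated rotations of stable matchings). *)
Definition rot_le (R1 R2 : {set 'I_n * 'I_n}) : Prop :=
  forall M : {perm 'I_n}, stable M -> eliminated M R2 -> eliminated M R1.

Definition rot_lt (R1 R2 : {set 'I_n * 'I_n}) : Prop :=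
  rot_le R1 R2 /\ R1 <> R2.

Definition rot_cover (R1 R2 : {set 'I_n * 'I_n}) : Prop :=
  is_rotation R1 /\ is_rotation R2 /\ rot_lt R1 R2 /\
  ~ (exists R3, is_rotation R3 /\ rot_lt R1 R3 /\ rot_lt R3 R2).

Definition hasse_edge (R1 R2 : {set 'I_n * 'I_n}) : Prop :=
  rot_cover R1 R2 \/ rot_cover R2 R1.

End SM.

Section PW.
Variable T : finType.
Variables (V : T -> Prop) (E : T -> T -> Prop).

Definition path_decomposition (X : seq {set T}) : Prop :=
  [/\ (forall B, B \in X -> forall v, v \in B -> V v),
      (forall v, V v -> exists2 B, B \in X & v \in B),
      (forall u v, V u -> V v -> E u v -> exists2 B, B \in X & (u \in B) && (v \in B)) &
      (forall i j l, i <= j -> j <= l -> l < size X ->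
         nth set0 X i :&: nth set0 X l \subset nth set0 X j)].

(* width = max_i |X_i| - 1 *)
Definition pd_width_le (X : seq {set T}) (p : nat) : Prop :=
  forall B, B \in X -> #|B| <= p.+1.

Definition pathwidth_le (p : nat) : Prop :=
  exists X, path_decomposition X /\ pd_width_le X p.
End PW.

From Pilot Require Import Defs.
From mathcomp Require Import all_boot perm.
From mathcomp Require Import zify.
From Stdlib Require Import ClassicalEpsilon.
Set Implicit Arguments. Unset Strict Implicit. Unset Printing Implicit Defensive.

(** Lay the rotations out along the list of a fixed man m0: writing A(w) for
    the rank m0 gives to w, the bag B_t collects the rotations having a woman of
    A-rank at most t + 4k - 4 and one of A-rank at least t.  Membership in B_t is
    an interval condition on t, so B_0, ..., B_(n-1) is a path decomposition as
    soon as every Hasse edge lies in some bag.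

    Edges: if R2 covers R1, some man ranks a woman of one of them between two
    (possibly equal) women of the other.  To see this, let V be the least stable
    matching eliminating R2 and Z the greatest stable matching below V that does
    not eliminate R1; then R1 is exposed in Z and, by the cover hypothesis, R2 is
    the next rotation met on the way from Z to V.  Under k-range preferences the
    ranks given by that man and by m0 differ by less than k, which puts R1 and R2
    in a common bag.

    Width: distinct rotations share no pair (m, w), so B_t injects into the pairs
    of its rotations with A(w) in [t, t + 4k - 4]; such a pair exists because
    A-ranks drop by at most 2k - 2 along a rotation.  In a stable pair the rank of
    m for a fixed woman w0 is within 3k - 3 of A(w), which leaves at most
    (4k - 3)(10k - 9) <= 50k^2 + 1 candidates. *)

Lemma next_invariant (T : finType) (p : seq T) (P : pred T) x :
  uniq p -> x \in p -> P x -> {in p, forall y, P y -> P (path.next p y)} ->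
  {in p, forall y, P y}.
Proof.
move=> Up xp Px Pnext y yp.
have /connectP[q pq ->] := connect_cycle (cycle_next Up) xp yp.
elim: q x xp Px pq => //= z q IHq x xp Px /andP[/eqP <- pq].
by apply: IHq pq; [rewrite mem_next | apply: Pnext].
Qed.

Lemma splice_inj (T : finType) (f g : {perm T}) (B : {set T}) :
  f @: B = g @: B -> injective (fun x => if x \in B then f x else g x).
Proof.
move=> fgB x y; have g_B z : (g z \in f @: B) = (z \in B).
  by rewrite fgB mem_imset //; apply: perm_inj.
have f_B z : (f z \in f @: B) = (z \in B) by rewrite mem_imset //; apply: perm_inj.
case: ifP => xB; case: ifP => yB; try exact: perm_inj.
  by move=> fg; move: (g_B y); rewrite -fg f_B xB yB.
by move=> gf; move: (g_B x); rewrite gf f_B xB yB.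
Qed.

Lemma fcycle_exists (T : finType) (f : T -> T) (P : pred T) x :
  P x -> {homo f : y / P y} ->
  exists p, [/\ p != [::], uniq p, fcycle f p & all P p].
Proof.
move=> Px fP; have iterP j y : P y -> P (iter j f y).
  by move=> Py; elim: j => //= j; apply: fP.
have /trajectP[i lt_i iterE] : looping f x #|T|.
  rewrite -[looping _ _ _]negbK -looping_uniq; apply/negP => /card_uniqP.
  by rewrite size_traject => card_T; have := max_card (mem (traject f x #|T|.+1));
    rewrite card_T ltnn.
set z := iter i f x.
have z_cycle : fcycle f (orbit f z).
  apply/(orbitPcycle 0 3); exists (#|T| - i).-1.
  by rewrite prednK ?subn_gt0 // /z -iterD subnK ?(ltnW lt_i).
exists (orbit f z); split=> //; first by rewrite /orbit -orderSpred.
by apply/allP => y /trajectP[j _ ->]; apply/iterP/iterP.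
Qed.

Lemma sum_le_eq (T : finType) (F G : T -> nat) :
  (forall i, F i <= G i) -> \sum_i G i <= \sum_i F i -> F =1 G.
Proof.
move=> le_FG le_sum i; apply/eqP.
have /leqif_sum sum_eq : forall j, true -> F j <= G j ?= iff (F j == G j).
  by move=> j _; apply/leqif_eq/le_FG.
by move: le_sum; rewrite leq_eqVlt ltnNge sum_eq orbF eq_sym sum_eq => /forall_inP->.
Qed.

(** * Stable matchings and rotations *)

Section StableMatchings.
Variables (n : nat) (pm pw : 'I_n -> {perm 'I_n}).
Implicit Types (M X Y Z J : {perm 'I_n}) (m w : 'I_n) (ms : seq 'I_n) (R : {set 'I_n * 'I_n}).
Local Notation pM := (PM pm).
Local Notation pW := (PW pw).
Local Notation stable := (Defs.stable pm pw).
Local Notation next := (Defs.next pm pw).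
Local Notation eliminated := (Defs.eliminated pm).
Local Notation husband := (@Defs.husband n).

Lemma PM_inj m : injective (pM m).
Proof. by move=> w1 w2 /val_inj/perm_inj. Qed.

Lemma PW_inj w : injective (pW w).
Proof. by move=> m1 m2 /val_inj/perm_inj. Qed.

Lemma ltn_PM m w1 w2 : w1 != w2 -> pM m w1 <= pM m w2 -> pM m w1 < pM m w2.
Proof. by move=> ne; rewrite leq_eqVlt (inj_eq (@PM_inj m)) (negbTE ne). Qed.

Lemma ltn_PW w m1 m2 : m1 != m2 -> pW w m1 <= pW w m2 -> pW w m1 < pW w m2.
Proof. by move=> ne; rewrite leq_eqVlt (inj_eq (@PW_inj w)) (negbTE ne). Qed.

Lemma perm_husband M w : M (husband M w) = w.
Proof. exact: permKV. Qed.

Lemma husband_perm M m : husband M (M m) = m.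
Proof. exact: permK. Qed.

Lemma stableP M :
  reflect (forall m w, pM m w < pM m (M m) -> pW w (husband M w) <= pW w m)
          (stable M).
Proof.
apply: (iffP forallP) => [sM m w lt_w | sM m].
  by move/forallP: (sM m) => /(_ w); rewrite lt_w /= -leqNgt.
by apply/forallP => w; apply/negP => /andP[/sM]; rewrite leqNgt => /negP.
Qed.

Lemma stable_man_prefers M w h :
  stable M -> pW w h < pW w (husband M w) -> pM h (M h) < pM h w.
Proof.
move=> sM lt_h; rewrite ltnNge leq_eqVlt (inj_eq (@PM_inj h)) negb_or.
apply/andP; split; first by apply: contraTneq lt_h => ->; rewrite husband_perm ltnn.
by apply/negP => /(stableP _ sM); rewrite leqNgt lt_h.
Qed.

Definition better M X := [set m | pM m (M m) < pM m (X m)].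

Section Better.
Variables M X : {perm 'I_n}.
Hypotheses (sM : stable M) (sX : stable X).

Lemma better_wife_prefers m :
  m \in better M X -> pW (M m) (husband X (M m)) < pW (M m) m.
Proof.
rewrite inE => lt_MX; set h := husband X (M m).
have Xh : X h = M m by rewrite perm_husband.
have h_neq_m : h != m by apply: contraTneq lt_MX => h_m; rewrite -Xh h_m ltnn.
exact: ltn_PW h_neq_m (stableP _ sX _ _ lt_MX).
Qed.

Lemma better_husbandX m : m \in better M X -> husband X (M m) \in better M X.
Proof.
move=> /better_wife_prefers lt_h; rewrite inE perm_husband.
by apply: stable_man_prefers; rewrite ?husband_perm.
Qed.

Lemma better_wives : M @: better M X = X @: better M X.
Proof.
apply/eqP; rewrite eqEcard !card_imset ?leqnn ?andbT; try exact: perm_inj.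
apply/subsetP => _ /imsetP[m m_better ->]; apply/imsetP.
by exists (husband X (M m)); rewrite ?perm_husband ?better_husbandX.
Qed.

Lemma better_husbandM m : m \in better M X -> husband M (X m) \in better M X.
Proof.
move=> m_better; have : X m \in M @: better M X by rewrite better_wives imset_f.
by case/imsetP=> h h_better ->; rewrite husband_perm.
Qed.

End Better.

Definition exposed M ms :=
  [&& ms != [::], uniq ms & cycle (fun a b => next M a (M b)) ms].

Definition rotset M ms : {set 'I_n * 'I_n} := [set (m, M m) | m in ms].

(* [undup] makes this a permutation for every [ms]; on a duplicate-free [ms] it
   maps each man to his cyclic successor and fixes the other men. *)
Definition next_perm ms : {perm 'I_n} :=
  perm (can_inj (prev_next (undup_uniq ms))).

Definition eliminate M ms : {perm 'I_n} := (next_perm ms * M)%g.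

Lemma exposed_uniq M ms : exposed M ms -> uniq ms.
Proof. by case/and3P. Qed.

Lemma exposed_mem M ms : exposed M ms -> exists m, m \in ms.
Proof. by case/and3P; case: ms => // m ms _ _ _; exists m; rewrite mem_head. Qed.

Lemma rotationP R :
  is_rotation pm pw R <-> exists M ms, [/\ stable M, exposed M ms & R = rotset M ms].
Proof.
split=> [[M [sM [ms [? ? ? ?]]]] | [M [ms [sM /and3P[? ? ?] ->]]]].
  by exists M, ms; split=> //; apply/and3P.
by exists M; split=> //; exists ms.
Qed.

Lemma eliminateE M ms m : uniq ms -> eliminate M ms m = M (path.next ms m).
Proof. by move=> Ums; rewrite permM permE undup_id. Qed.

Lemma eliminate_notin M ms m : uniq ms -> m \notin ms -> eliminate M ms m = M m.
Proof. by move=> Ums m_ms; rewrite eliminateE // next_nth (negbTE m_ms). Qed.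

Lemma husband_eliminate M ms w :
  uniq ms -> husband (eliminate M ms) w = path.prev ms (husband M w).
Proof.
move=> Ums; set h := path.prev ms _.
have <- : eliminate M ms h = w by rewrite eliminateE // next_prev // perm_husband.
by rewrite husband_perm.
Qed.

Lemma nextP M m w :
  reflect [/\ pM m (M m) < pM m w, pW w m < pW w (husband M w) &
             forall w', pM m (M m) < pM m w' -> pM m w' < pM m w ->
                        pW w' (husband M w') <= pW w' m]
          (next M m w).
Proof.
apply: (iffP and3P) => [[lt_Mw pref /forallP nopref] | [lt_Mw pref nopref]].
  split=> // w' lt_Mw' lt_w'w.
  by move: (nopref w'); rewrite lt_Mw' lt_w'w /wprefers -leqNgt.
split=> //; apply/forallP => w'; apply/implyP => /andP[lt_Mw' lt_w'w].
by rewrite /wprefers -leqNgt nopref.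
Qed.

Section Exposed.
Variables (M : {perm 'I_n}) (ms : seq 'I_n).
Hypothesis Ems : exposed M ms.
Let Ums : uniq ms := exposed_uniq Ems.

Lemma exposed_next m : m \in ms -> next M m (M (path.next ms m)).
Proof. by case/and3P: Ems => _ _ /next_cycle; apply. Qed.

Lemma eliminate_worse m : m \in ms -> pM m (M m) < pM m (eliminate M ms m).
Proof. by move=> m_ms; rewrite eliminateE //; case/nextP: (exposed_next m_ms). Qed.

Lemma eliminate_le m : pM m (M m) <= pM m (eliminate M ms m).
Proof.
have [m_ms | m_ms] := boolP (m \in ms); first exact/ltnW/eliminate_worse.
by rewrite eliminate_notin.
Qed.

Lemma eliminated_eliminate : eliminated (eliminate M ms) (rotset M ms).
Proof.
have [m m_ms] := exposed_mem Ems.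
by apply/existsP; exists (m, M m); rewrite imset_f ?eliminate_worse.
Qed.

Lemma eliminate_husband_le w :
  pW w (husband (eliminate M ms) w) <= pW w (husband M w).
Proof.
rewrite husband_eliminate //; set h := husband M w.
have [h_ms | h_ms] := boolP (h \in ms); last by rewrite prev_nth (negbTE h_ms).
have /nextP[_ /ltnW + _] := exposed_next (etrans (mem_prev ms h) h_ms).
by rewrite next_prev // perm_husband.
Qed.

Lemma stable_eliminate : stable M -> stable (eliminate M ms).
Proof.
move=> sM; apply/stableP => m w lt_w; apply: leq_trans (eliminate_husband_le w) _.
have [m_ms | m_ms] := boolP (m \in ms); last first.
  by move: lt_w; rewrite eliminate_notin //; apply: (stableP _ sM).
move: lt_w; rewrite eliminateE // => lt_w.
have /nextP[_ _ nopref] := exposed_next m_ms.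
case: (ltngtP (pM m w) (pM m (M m))) => [lt_wM | lt_Mw | /PM_inj ->].
- exact: (stableP _ sM).
- exact: nopref.
- by rewrite husband_perm.
Qed.

End Exposed.

Lemma eliminatedP M0 M ms :
  reflect (exists2 m, m \in ms & pM m (M0 m) < pM m (M m))
          (eliminated M (rotset M0 ms)).
Proof.
apply: (iffP existsP) => [[_ /andP[/imsetP[m m_ms ->] /= lt_m]] | [m m_ms lt_m]].
  by exists m.
by exists (m, M0 m); rewrite imset_f.
Qed.

Section EliminatedRotation.
Variables (M0 M : {perm 'I_n}) (ms : seq 'I_n).
Hypotheses (sM0 : stable M0) (Ems : exposed M0 ms) (sM : stable M).

Lemma worse_next_wife m : m \in ms -> pM m (M0 m) < pM m (M m) ->
  pM m (M0 (path.next ms m)) <= pM m (M m).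
Proof.
move=> m_ms lt_m; rewrite leqNgt; apply/negP => lt_next.
have /nextP[_ _ nopref] := exposed_next Ems m_ms.
set v := M m in lt_m lt_next; set h := husband M0 v.
have le_h := nopref v lt_m lt_next; rewrite -/h in le_h.
have h_neq_m : h != m.
  by apply: contraTneq lt_m => <-; rewrite /h perm_husband ltnn.
have h_better : h \in better M M0.
  rewrite inE /h perm_husband; apply: stable_man_prefers => //.
  by rewrite /v husband_perm; apply: ltn_PW.
have := better_husbandM sM sM0 h_better.
by rewrite perm_husband husband_perm inE ltnNge (ltnW lt_m).
Qed.

Lemma worse_next_man m : m \in ms -> pM m (M0 m) < pM m (M m) ->
  pM (path.next ms m) (M0 (path.next ms m)) < pM (path.next ms m) (M (path.next ms m)).
Proof.
move=> m_ms lt_m; have le_next := worse_next_wife m_ms lt_m.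
have /nextP[lt_Mm' + _] := exposed_next Ems m_ms; rewrite husband_perm => pref_m.
set m' := path.next ms m in le_next lt_Mm' pref_m *.
set w' := M0 m' in lt_Mm' pref_m le_next.
have m'_neq_m : m' != m by apply: contraTneq lt_Mm' => m'_m; rewrite /w' m'_m ltnn.
rewrite ltnNge; apply/negP => le_m'.
have M_m'_neq : M m' != w'.
  apply/eqP => M_m'; have : pM m w' < pM m (M m).
    by rewrite ltn_PM // -M_m' (inj_eq perm_inj).
  by move/(stableP _ sM); rewrite -{2}M_m' husband_perm leqNgt pref_m.
have m'_better : m' \in better M M0 by rewrite inE ltn_PM.
have h_better := better_husbandM sM sM0 m'_better; rewrite -/w' in h_better.
set h := husband M w' in h_better.
have := better_wife_prefers sM0 h_better.
rewrite perm_husband /w' husband_perm => pref_h.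
have [w'_Mm | w'_Mm] := eqVneq w' (M m).
  by move: h_better; rewrite /h w'_Mm husband_perm inE ltnNge (ltnW lt_m).
have /(stableP _ sM) : pM m w' < pM m (M m) by rewrite ltn_PM.
by rewrite -/h leqNgt (ltn_trans pref_m pref_h).
Qed.

Lemma eliminated_worse :
  eliminated M (rotset M0 ms) -> {in ms, forall m, pM m (M0 m) < pM m (M m)}.
Proof.
case/eliminatedP => m m_ms lt_m.
apply: (next_invariant (exposed_uniq Ems) m_ms lt_m) => m' m'_ms.
exact: worse_next_man.
Qed.

End EliminatedRotation.

Lemma not_eliminatedP M R :
  reflect (forall p, p \in R -> pM p.1 (M p.1) <= pM p.1 p.2) (~~ eliminated M R).
Proof.
apply: (iffP existsPn) => [notel p p_R | le_R p].
  by move: (notel p); rewrite p_R -leqNgt.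
by apply/negP => /andP[/le_R]; rewrite leqNgt => /negP.
Qed.

Section NewlyEliminated.
Variables (X MQ : {perm 'I_n}) (ms mq : seq 'I_n).
Hypotheses (sX : stable X) (Ems : exposed X ms) (sMQ : stable MQ) (Emq : exposed MQ mq).
Hypothesis notel_X : ~~ eliminated X (rotset MQ mq).
Hypothesis el_Y : eliminated (eliminate X ms) (rotset MQ mq).

Lemma newly_eliminated_men q : q \in mq -> q \in ms /\ X q = MQ q.
Proof.
move=> q_mq; have Ums := exposed_uniq Ems.
have lt_Y := eliminated_worse sMQ Emq (stable_eliminate Ems sX) el_Y q_mq.
have le_X : pM q (X q) <= pM q (MQ q).
  by move/not_eliminatedP: notel_X => /(_ (q, MQ q)); apply; rewrite imset_f.
have q_ms : q \in ms.
  by apply: contraTT lt_Y => q_ms; rewrite eliminate_notin // -leqNgt.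
split=> //; apply/(@PM_inj q)/eqP; rewrite eqn_leq le_X leqNgt /=.
apply/negP => lt_X; have el_MQ : eliminated MQ (rotset X ms).
  by apply/eliminatedP; exists q.
have := worse_next_wife sX Ems sMQ q_ms lt_X.
by rewrite -eliminateE // leqNgt lt_Y.
Qed.

End NewlyEliminated.

Lemma newly_eliminated_rotation X MQ ms mq :
  stable X -> exposed X ms -> stable MQ -> exposed MQ mq ->
  ~~ eliminated X (rotset MQ mq) -> eliminated (eliminate X ms) (rotset MQ mq) ->
  rotset MQ mq = rotset X ms.
Proof.
move=> sX Ems sMQ Emq notel_X el_Y.
have mq_sub := newly_eliminated_men sX Ems sMQ Emq notel_X el_Y.
have [q0 q0_mq] := exposed_mem Emq; have [q0_ms X_q0] := mq_sub q0 q0_mq.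
have notel_MQ : ~~ eliminated MQ (rotset X ms).
  apply/negP => /(eliminated_worse sX Ems sMQ)/(_ q0 q0_ms).
  by rewrite X_q0 ltnn.
have el_YQ : eliminated (eliminate MQ mq) (rotset X ms).
  by apply/eliminatedP; exists q0; rewrite // X_q0 eliminate_worse.
have ms_sub := newly_eliminated_men sMQ Emq sX Ems notel_MQ el_YQ.
apply/setP => p; apply/imsetP/imsetP => -[q q_m ->].
  by have [q_ms <-] := mq_sub q q_m; exists q.
by have [q_mq <-] := ms_sub q q_m; exists q.
Qed.

Lemma rotset_shared_pair X MQ ms mq m :
  stable X -> exposed X ms -> stable MQ -> exposed MQ mq ->
  m \in ms -> m \in mq -> X m = MQ m -> rotset MQ mq = rotset X ms.
Proof.
move=> sX Ems sMQ Emq m_ms m_mq X_m.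
apply: newly_eliminated_rotation => //.
  by apply/negP => /(eliminated_worse sMQ Emq sX)/(_ m m_mq); rewrite X_m ltnn.
by apply/eliminatedP; exists m; rewrite // -X_m eliminate_worse.
Qed.

(** * The lattice of stable matchings *)

Definition bestw M X m := if m \in better X M then X m else M m.
Definition worstw M X m := if m \in better X M then M m else X m.

Lemma bestw_le_l M X m : pM m (bestw M X m) <= pM m (M m).
Proof. by rewrite /bestw inE; case: ifP => // /ltnW. Qed.

Lemma bestw_le_r M X m : pM m (bestw M X m) <= pM m (X m).
Proof. by rewrite /bestw inE; case: ifP => // /negbT; rewrite -leqNgt. Qed.

Lemma worstw_ge_l M X m : pM m (M m) <= pM m (worstw M X m).
Proof. by rewrite /worstw inE; case: ifP => // /negbT; rewrite -leqNgt. Qed.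

Lemma worstw_ge_r M X m : pM m (X m) <= pM m (worstw M X m).
Proof. by rewrite /worstw inE; case: ifP => // /ltnW. Qed.

Lemma bestw_eq M X m : bestw M X m = M m \/ bestw M X m = X m.
Proof. by rewrite /bestw; case: ifP; [right | left]. Qed.

Lemma worstw_eq M X m : worstw M X m = M m \/ worstw M X m = X m.
Proof. by rewrite /worstw; case: ifP; [left | right]. Qed.

Lemma worstwC M X : worstw M X =1 worstw X M.
Proof.
move=> m; rewrite /worstw !inE.
by case: (ltngtP (pM m (X m)) (pM m (M m))) => // /PM_inj ->.
Qed.

Lemma worstw_husband_le M X J w : stable M -> stable X -> J =1 worstw M X ->
  pW w (husband J w) <= pW w (husband M w).
Proof.
move=> sM sX JE; set h := husband J w.
have : J h = w by rewrite perm_husband.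
rewrite JE /worstw; case: ifP => [_ <- | h_better Xh]; first by rewrite husband_perm.
have [Mh_Xh | Mh_Xh] := eqVneq (M h) (X h); first by rewrite -Xh -Mh_Xh husband_perm.
have h_MX : h \in better M X.
  by move/negbT: h_better; rewrite !inE -leqNgt; apply: ltn_PM.
have := better_husbandM sM sX h_MX; rewrite Xh => hM_better.
have := better_wife_prefers sX hM_better; rewrite perm_husband -Xh husband_perm.
exact: ltnW.
Qed.

Section Lattice.
Variables M X : {perm 'I_n}.
Hypotheses (sM : stable M) (sX : stable X).

Lemma stable_join : exists2 J, stable J & J =1 bestw M X.
Proof.
have bestw_inj : injective (bestw M X).
  by apply: splice_inj; rewrite better_wives.
exists (perm bestw_inj); last exact: permE.
apply/stableP => m w; rewrite permE => lt_w.
move: (perm_husband (perm bestw_inj) w); move: (husband _ w) => h.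
rewrite permE; case: (bestw_eq M X h) => -> Jh.
  rewrite -(husband_perm M h) Jh; apply: (stableP _ sM).
  exact: leq_trans lt_w (bestw_le_l _ _ _).
rewrite -(husband_perm X h) Jh; apply: (stableP _ sX).
exact: leq_trans lt_w (bestw_le_r _ _ _).
Qed.

Lemma stable_meet : exists2 J, stable J & J =1 worstw M X.
Proof.
have worstw_inj : injective (worstw M X).
  by apply: splice_inj; rewrite better_wives.
exists (perm worstw_inj); last exact: permE.
have JE : perm worstw_inj =1 worstw M X by exact: permE.
have JE' : perm worstw_inj =1 worstw X M by move=> m; rewrite JE worstwC.
apply/stableP => m w; rewrite JE; case: (worstw_eq M X m) => -> lt_w.
  exact: leq_trans (worstw_husband_le w sM sX JE) (stableP _ sM _ _ lt_w).
exact: leq_trans (worstw_husband_le w sX sM JE') (stableP _ sX _ _ lt_w).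
Qed.

End Lattice.

Definition men_le M X := forall m, pM m (M m) <= pM m (X m).

Definition prefers_after M m w := (pM m (M m) < pM m w) && wprefers pw M w m.

Section ExposedRotation.
Variables M X : {perm 'I_n}.
Hypotheses (sX : stable X) (le_MX : men_le M X).

Lemma prefers_after_other m : M m != X m -> prefers_after M m (X m).
Proof.
move=> MX_m; apply/andP; split; first exact: ltn_PM MX_m (le_MX m).
set h := husband M (X m); have Mh : M h = X m := perm_husband M (X m).
have h_neq_m : h != m by apply: contraNneq MX_m => h_m; rewrite -{1}h_m Mh.
have lt_h : pM h (X m) < pM h (X h).
  by rewrite -Mh; apply: ltn_PM (le_MX h); rewrite Mh (inj_eq perm_inj) eq_sym.
apply: ltn_PW; first by rewrite eq_sym.
by have := stableP _ sX _ _ lt_h; rewrite husband_perm.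
Qed.

Let first_after m := [arg min_(w < X m | prefers_after M m w) pM m w].

Let first_afterP m : M m != X m ->
  prefers_after M m (first_after m) /\
  forall w, prefers_after M m w -> pM m (first_after m) <= pM m w.
Proof.
by move=> MX_m; rewrite /first_after; case: arg_minnP; first exact: prefers_after_other.
Qed.

Let next_first_after m : M m != X m -> next M m (first_after m).
Proof.
move=> MX_m; have [/andP[lt_s pref_s] s_min] := first_afterP MX_m.
apply/nextP; split=> // w' lt_w' lt_w'_s; rewrite leqNgt; apply/negP => pref_w'.
by have := s_min w'; rewrite /prefers_after lt_w' leqNgt lt_w'_s => /(_ pref_w').
Qed.

Let next_man m := if M m != X m then husband M (first_after m) else m.

Let next_man_moves m : M m != X m -> M (next_man m) != X (next_man m).
Proof.
move=> MX_m; rewrite /next_man MX_m perm_husband.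
have [/andP[_ pref_s] s_min] := first_afterP MX_m.
set w := first_after m in pref_s s_min *; set h := husband M w in pref_s *.
apply/eqP => Xh.
have [w_Xm | w_Xm] := eqVneq w (X m).
  have h_m : h = m by apply: (@perm_inj _ X); rewrite -Xh w_Xm.
  by move: MX_m; rewrite -{1}h_m /h perm_husband w_Xm eqxx.
have lt_w : pM m w < pM m (X m).
  exact: ltn_PM w_Xm (s_min _ (prefers_after_other MX_m)).
have := stableP _ sX _ _ lt_w; rewrite {2}Xh husband_perm leqNgt.
by move: pref_s; rewrite /wprefers -/h => ->.
Qed.

Lemma exposed_rotation_exists : (exists m, M m != X m) ->
  exists ms, exposed M ms /\ {in ms, forall m, pM m (M m) < pM m (X m)}.
Proof.
case=> m0 MX_m0.
have [ms [ms_nil Ums ms_cycle /allP ms_moves]] :=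
  fcycle_exists (P := [pred m | M m != X m]) MX_m0 next_man_moves.
exists ms; split=> [|m /ms_moves MX_m]; last by rewrite ltn_PM ?le_MX.
apply/and3P; split=> //; apply: cycle_from_next => // m m_ms.
have MX_m : M m != X m := ms_moves m m_ms.
by rewrite (nextE ms_cycle m_ms) /next_man MX_m perm_husband next_first_after.
Qed.

End ExposedRotation.

Lemma men_le_eliminated M X R : men_le M X -> eliminated M R -> eliminated X R.
Proof.
move=> le_MX /existsP[p /andP[p_R lt_p]]; apply/existsP; exists p.
by rewrite p_R (leq_trans lt_p).
Qed.

Lemma eliminated_diff M X R : eliminated M R -> ~~ eliminated X R -> exists m, X m != M m.
Proof.
move=> el_M notel_X; apply/existsP; apply: contraNT notel_X => /existsPn eq_MX.
by apply: men_le_eliminated el_M => m; have /negbNE/eqP-> := eq_MX m.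
Qed.

Lemma eliminated_bestw M0 ms M X J : stable M0 -> exposed M0 ms -> stable M -> stable X ->
  eliminated M (rotset M0 ms) -> eliminated X (rotset M0 ms) -> J =1 bestw M X ->
  eliminated J (rotset M0 ms).
Proof.
move=> sM0 Ems sM sX el_M el_X JE; have [m m_ms] := exposed_mem Ems.
apply/eliminatedP; exists m; rewrite // JE; case: (bestw_eq M X m) => ->.
  exact: eliminated_worse el_M m m_ms.
exact: eliminated_worse el_X m m_ms.
Qed.

Section Extremal.
Variable S : pred {perm 'I_n}.
Hypothesis S_stable : exists2 X, stable X & S X.
Let rank_sum M := \sum_m pM m (M m).

Lemma stable_least :
  (forall M X J, stable M -> stable X -> S M -> S X -> J =1 bestw M X -> S J) ->
  exists V, [/\ stable V, S V & forall X, stable X -> S X -> men_le V X].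
Proof.
move=> S_join; have [X0 sX0 SX0] := S_stable.
have SX0' : [pred X | stable X && S X] X0 by apply/andP.
case: (arg_minnP rank_sum SX0') => V /andP[sV SV] V_min.
exists V; split=> // X sX SX m; have [J sJ JE] := stable_join sV sX.
have le_JV : forall m, pM m (J m) <= pM m (V m) by move=> m'; rewrite JE bestw_le_l.
have SJ : [pred X | stable X && S X] J by rewrite /= sJ (S_join _ _ _ sV sX SV SX JE).
by rewrite -(sum_le_eq le_JV (V_min J SJ)) JE bestw_le_r.
Qed.

Lemma stable_greatest :
  (forall M X J, stable M -> stable X -> S M -> S X -> J =1 worstw M X -> S J) ->
  exists V, [/\ stable V, S V & forall X, stable X -> S X -> men_le X V].
Proof.
move=> S_meet; have [X0 sX0 SX0] := S_stable.
have SX0' : [pred X | stable X && S X] X0 by apply/andP.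
case: (arg_maxnP rank_sum SX0') => V /andP[sV SV] V_max.
exists V; split=> // X sX SX m; have [J sJ JE] := stable_meet sV sX.
have le_VJ : forall m, pM m (V m) <= pM m (J m) by move=> m'; rewrite JE worstw_ge_l.
have SJ : [pred X | stable X && S X] J by rewrite /= sJ (S_meet _ _ _ sV sX SV SX JE).
by rewrite (sum_le_eq le_VJ (V_max J SJ)) JE worstw_ge_r.
Qed.

End Extremal.

(** * Rotations joined by a Hasse edge interleave *)

Definition women R : {set 'I_n} := [set p.2 | p in R].

Definition interleaved R1 R2 := exists m x y z,
  [/\ pM m x <= pM m y, pM m y <= pM m z, x \in women R1, z \in women R1 & y \in women R2].

Lemma women_rotset M ms m : m \in ms -> M m \in women (rotset M ms).
Proof. by move=> m_ms; apply/imsetP; exists (m, M m); rewrite ?imset_f. Qed.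

Lemma women_rotset_eliminate M ms m :
  uniq ms -> m \in ms -> eliminate M ms m \in women (rotset M ms).
Proof. by move=> Ums m_ms; rewrite eliminateE // women_rotset ?mem_next. Qed.

Lemma interleaved_common_woman R1 R2 w :
  w \in women R1 -> w \in women R2 -> interleaved R1 R2.
Proof. by move=> w_R1 w_R2; exists w, w, w, w. Qed.

Lemma interleaved_newly_eliminated Z ms R : uniq ms ->
  ~~ eliminated Z R -> eliminated (eliminate Z ms) R -> interleaved (rotset Z ms) R.
Proof.
move=> Ums /not_eliminatedP notel_Z /existsP[p /andP[p_R lt_p]].
have le_p := notel_Z p p_R; set m := p.1 in lt_p le_p.
have m_ms : m \in ms.
  by apply: contraTT lt_p => m_ms; rewrite eliminate_notin // -leqNgt.
exists m, (Z m), p.2, (eliminate Z ms m); split; rewrite ?women_rotset //.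
- exact: ltnW.
- exact: women_rotset_eliminate.
- exact: imset_f.
Qed.

Lemma husband_eliminate_notin Z ms w :
  uniq ms -> husband Z w \notin ms -> husband (eliminate Z ms) w = husband Z w.
Proof. by move=> Ums h_ms; rewrite husband_eliminate // prev_nth (negbTE h_ms). Qed.

Lemma next_eliminate Z ms m w : uniq ms -> m \notin ms -> husband Z w \notin ms ->
  next (eliminate Z ms) m w ->
  next Z m w \/ exists2 w', pM m (Z m) < pM m w' < pM m w & husband Z w' \in ms.
Proof.
move=> Ums m_ms h_ms /nextP[]; rewrite eliminate_notin // husband_eliminate_notin //.
move=> lt_w pref_w nopref.
have [/existsP[w' /and3P[lt_w' lt_w'w h'_ms]] | /existsPn none] :=
  boolP [exists w', [&& pM m (Z m) < pM m w', pM m w' < pM m w & husband Z w' \in ms]].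
  by right; exists w'; rewrite ?lt_w'.
left; apply/nextP; split=> // w' lt_w' lt_w'w.
have h'_ms : husband Z w' \notin ms by move: (none w'); rewrite lt_w' lt_w'w.
by rewrite -(husband_eliminate_notin Ums h'_ms) nopref.
Qed.

Lemma interleaved_after_elimination Z ms ms' : uniq ms ->
  exposed (eliminate Z ms) ms' -> {in ms', forall m, m \notin ms} -> ~~ exposed Z ms' ->
  interleaved (rotset Z ms) (rotset (eliminate Z ms) ms') \/
  interleaved (rotset (eliminate Z ms) ms') (rotset Z ms).
Proof.
move=> Ums Ems' disj notE; set Y := eliminate Z ms in Ems' *.
have ZY : {in ms', Z =1 Y} by move=> m /disj m_ms; rewrite /Y eliminate_notin.
have [m m_ms' notnext] : exists2 m, m \in ms' & ~~ next Z m (Z (path.next ms' m)).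
  apply/exists_inP; apply: contraNT notE => /exists_inPn nextZ.
  case/and3P: Ems' => ms'_nil Ums' _; apply/and3P; split=> //.
  by apply: cycle_from_next => // m m_ms'; move/negbNE: (nextZ m m_ms').
set m' := path.next ms' m in notnext; have m'_ms' : m' \in ms' by rewrite mem_next.
set w := Z m' in notnext.
have w_Y : w \in women (rotset Y ms') by rewrite /w ZY // women_rotset.
have [h_ms | h_ms] := boolP (husband Z w \in ms).
  left; apply: interleaved_common_woman w_Y.
  by have := women_rotset Z h_ms; rewrite perm_husband.
have nextY : next Y m w by rewrite /w ZY //; apply: exposed_next.
case: (next_eliminate Ums (disj m m_ms') h_ms nextY) => [nextZ | [w' /andP[lt_w' lt_w'w] h'_ms]].
  by rewrite nextZ in notnext.
right; exists m, (Z m), w', w; split=> //.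
- exact: ltnW.
- exact: ltnW.
- by rewrite ZY // women_rotset.
- by have := women_rotset Z h'_ms; rewrite perm_husband.
Qed.

Section Cover.
Variables (M1 M2 : {perm 'I_n}) (ms1 ms2 : seq 'I_n).
Hypotheses (sM1 : stable M1) (E1 : exposed M1 ms1).
Local Notation R1 := (rotset M1 ms1).
Local Notation R2 := (rotset M2 ms2).
Hypothesis le12 : rot_le pm pw R1 R2.
Variables V2 Z : {perm 'I_n}.
Hypotheses (sV2 : stable V2) (elV2 : eliminated V2 R2)
  (V2_least : forall X, stable X -> eliminated X R2 -> men_le V2 X).
Hypotheses (sZ : stable Z) (Z_V2 : men_le Z V2) (notelZ : ~~ eliminated Z R1)
  (Z_greatest : forall X, stable X -> men_le X V2 -> ~~ eliminated X R1 -> men_le X Z).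

Lemma exposed_toward_V2_is_R1 ms :
  exposed Z ms -> {in ms, forall m, pM m (Z m) < pM m (V2 m)} ->
  rotset Z ms = R1 /\ men_le (eliminate Z ms) V2.
Proof.
move=> Ems lt_V2; have Ums := exposed_uniq Ems.
have le_Y : men_le (eliminate Z ms) V2.
  move=> m; have [m_ms | m_ms] := boolP (m \in ms); last by rewrite eliminate_notin.
  by rewrite eliminateE //; exact: (worse_next_wife sZ Ems sV2 m_ms (lt_V2 m m_ms)).
split=> //; have [el_Y | notel_Y] := boolP (eliminated (eliminate Z ms) R1).
  exact: esym (newly_eliminated_rotation sZ Ems sM1 E1 notelZ el_Y).
have [m m_ms] := exposed_mem Ems.
have := Z_greatest (stable_eliminate Ems sZ) le_Y notel_Y m.
by rewrite leqNgt eliminate_worse.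
Qed.

Lemma R1_exposed_at_Z :
  exists ms, [/\ exposed Z ms, rotset Z ms = R1 & men_le (eliminate Z ms) V2].
Proof.
have [m Zm] := eliminated_diff (le12 sV2 elV2) notelZ.
have [ms [Ems lt_ms]] := exposed_rotation_exists sV2 Z_V2 (ex_intro _ m Zm).
by exists ms; have [] := exposed_toward_V2_is_R1 Ems lt_ms.
Qed.

Hypothesis no_middle :
  ~ exists R3, is_rotation pm pw R3 /\ rot_lt pm pw R1 R3 /\ rot_lt pm pw R3 R2.

Lemma R2_exposed_after_R1 ms : exposed Z ms -> rotset Z ms = R1 ->
  men_le (eliminate Z ms) V2 -> ~~ eliminated (eliminate Z ms) R2 ->
  exists ms', [/\ exposed (eliminate Z ms) ms', rotset (eliminate Z ms) ms' = R2 &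
                  {in ms', forall m, pM m (eliminate Z ms m) < pM m (V2 m)}].
Proof.
move=> Ems eqR1 le_Y notel_Y2; set Y := eliminate Z ms in le_Y notel_Y2 *.
have sY : stable Y := stable_eliminate Ems sZ.
have [m1 Ym1] := eliminated_diff elV2 notel_Y2.
have [ms' [Ems' lt_ms']] := exposed_rotation_exists sV2 le_Y (ex_intro _ m1 Ym1).
exists ms'; split=> //; set rho := rotset Y ms'.
have notel_Y : ~~ eliminated Y rho by apply/negP => /eliminatedP[m _]; rewrite ltnn.
have el_V2 : eliminated V2 rho.
  by have [m m_ms'] := exposed_mem Ems'; apply/eliminatedP; exists m; rewrite ?lt_ms'.
have rho_R2 : rot_le pm pw rho R2.
  by move=> X sX elX; apply: men_le_eliminated (V2_least sX elX) el_V2.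
(* A matching eliminating rho but not R1, joined with V2, would lie below Z,
   so Y would eliminate its own exposed rotation. *)
have R1_rho : rot_le pm pw R1 rho.
  move=> X sX elX; apply: contraT => notelX.
  have [J sJ JE] := stable_join sX sV2.
  have J_V2 : men_le J V2 by move=> m; rewrite JE bestw_le_r.
  have notelJ : ~~ eliminated J R1.
    by apply: contra notelX; apply: men_le_eliminated => m; rewrite JE bestw_le_l.
  have elJ := eliminated_bestw sY Ems' sX sV2 elX el_V2 JE.
  have elZ := men_le_eliminated (Z_greatest sJ J_V2 notelJ) elJ.
  by move: notel_Y; rewrite (men_le_eliminated (eliminate_le Ems) elZ).
have rho_neq_R1 : rho != R1.
  by apply: contraNneq notel_Y => ->; rewrite -eqR1 eliminated_eliminate.
apply/eqP; apply: contraT => rho_neq_R2; case: no_middle; exists rho.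
split; first by apply/rotationP; exists Y, ms'.
by split; split=> //; apply/eqP; rewrite // eq_sym.
Qed.

Lemma interleaved_of_cover : R1 <> R2 -> interleaved R1 R2 \/ interleaved R2 R1.
Proof.
move=> neq12; have [ms [Ems eqR1 le_Y]] := R1_exposed_at_Z; have Ums := exposed_uniq Ems.
set Y := eliminate Z ms in le_Y.
have notelZ2 : ~~ eliminated Z R2 by apply: contra notelZ; apply: le12.
have [el_Y2 | notel_Y2] := boolP (eliminated Y R2).
  by left; rewrite -eqR1; apply: interleaved_newly_eliminated Ums notelZ2 el_Y2.
have [ms' [Ems' eqR2 lt_ms']] := R2_exposed_after_R1 Ems eqR1 le_Y notel_Y2.
rewrite -eqR1 -eqR2 in neq12 *.
have [/exists_inP[m m_ms m_ms'] | /exists_inPn disj] := boolP [exists m in ms, m \in ms'].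
  have Ym_Z : Y m \in women (rotset Z ms) by apply: women_rotset_eliminate.
  by left; apply: interleaved_common_woman Ym_Z (women_rotset Y m_ms').
have disj' : {in ms', forall m, m \notin ms}.
  by move=> m m_ms'; apply: contraTN m_ms' => /disj.
have ZY : {in ms', Z =1 Y} by move=> m /disj' m_ms; rewrite /Y eliminate_notin.
have notE : ~~ exposed Z ms'.
  apply/negP => EZ'; apply: neq12.
  have lt_Z : {in ms', forall m, pM m (Z m) < pM m (V2 m)}.
    by move=> m m_ms'; rewrite ZY ?lt_ms'.
  have [R1_eq _] := exposed_toward_V2_is_R1 EZ' lt_Z.
  by rewrite eqR1 -R1_eq; apply: eq_in_imset => m /ZY ->.
by case: (interleaved_after_elimination Ums Ems' disj' notE); [left | right].
Qed.

End Cover.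

Lemma least_eliminating M0 ms : stable M0 -> exposed M0 ms ->
  exists V, [/\ stable V, eliminated V (rotset M0 ms) &
             forall X, stable X -> eliminated X (rotset M0 ms) -> men_le V X].
Proof.
move=> sM0 Ems; apply: (stable_least (S := fun X => eliminated X (rotset M0 ms))).
  by exists (eliminate M0 ms); [apply: stable_eliminate | apply: eliminated_eliminate].
by move=> X Y J sX sY elX elY JE; apply: eliminated_bestw sM0 Ems sX sY elX elY JE.
Qed.

Lemma greatest_not_eliminating M0 ms V : stable M0 -> stable V ->
  exists Z, [/\ stable Z, men_le Z V /\ ~~ eliminated Z (rotset M0 ms) &
             forall X, stable X -> men_le X V -> ~~ eliminated X (rotset M0 ms) -> men_le X Z].
Proof.
move=> sM0 sV.
pose S X := [forall m, pM m (X m) <= pM m (V m)] && ~~ eliminated X (rotset M0 ms).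
have SP X : reflect (men_le X V /\ ~~ eliminated X (rotset M0 ms)) (S X).
  by apply: (iffP andP) => -[/forallP ? ?]; split=> //; apply/forallP.
have S_stable : exists2 J, stable J & S J.
  have [J sJ JE] := stable_join sM0 sV; exists J => //; apply/SP; split.
    by move=> m; rewrite JE bestw_le_r.
  by apply/not_eliminatedP => _ /imsetP[m _ ->]; rewrite JE bestw_le_l.
have S_meet X Y J : stable X -> stable Y -> S X -> S Y -> J =1 worstw X Y -> S J.
  move=> _ _ /SP[X_V notelX] /SP[Y_V notelY] JE; apply/SP; split.
    by move=> m; rewrite JE; case: (worstw_eq X Y m) => ->.
  apply/not_eliminatedP => p p_R; rewrite JE; case: (worstw_eq X Y p.1) => ->.
    exact: (elimT (not_eliminatedP _ _) notelX).
  exact: (elimT (not_eliminatedP _ _) notelY).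
have [Z [sZ SZ Z_max]] := stable_greatest S_stable S_meet.
exists Z; split=> //; first exact/SP.
by move=> X sX X_V notelX; apply: Z_max => //; apply/SP.
Qed.

Lemma rotation_pair_eq R1 R2 p : is_rotation pm pw R1 -> is_rotation pm pw R2 ->
  p \in R1 -> p \in R2 -> R1 = R2.
Proof.
move=> /rotationP[M1 [ms1 [sM1 E1 ->]]] /rotationP[M2 [ms2 [sM2 E2 ->]]].
case/imsetP=> m m_ms1 -> /imsetP[m' m_ms2 [m_m' M12]]; subst m'.
exact: esym (rotset_shared_pair sM1 E1 sM2 E2 m_ms1 m_ms2 M12).
Qed.

Lemma cover_interleaved R1 R2 :
  rot_cover pm pw R1 R2 -> interleaved R1 R2 \/ interleaved R2 R1.
Proof.
case=> /rotationP[M1 [ms1 [sM1 E1 ->]]] [/rotationP[M2 [ms2 [sM2 E2 ->]]]].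
case=> -[le12 neq12] no_middle.
have [V2 [sV2 elV2 V2_least]] := least_eliminating sM2 E2.
have [Z [sZ [Z_V2 notelZ] Z_greatest]] := greatest_not_eliminating ms1 sM1 sV2.
exact: (interleaved_of_cover sM1 E1 le12 sV2 elV2 V2_least sZ Z_V2 notelZ Z_greatest).
Qed.

End StableMatchings.

(** * Counting under k-range preferences *)

Definition window (T : finType) (f : T -> nat) lo len : {set T} :=
  [set x | lo <= f x < lo + len].

Lemma card_window (T : finType) (f : T -> nat) lo len :
  injective f -> #|window f lo len| <= len.
Proof.
move=> f_inj; rewrite cardE -(size_map f) -[len](size_iota lo).
apply: uniq_leq_size; first by rewrite map_inj_uniq ?enum_uniq.
by move=> _ /mapP[x + ->]; rewrite mem_enum inE mem_iota size_iota.
Qed.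

Lemma card_perm_lt n (P : {perm 'I_n}) r : r <= n -> r <= #|[set x | P x < r]|.
Proof.
move=> le_rn; pose g (j : 'I_r) := (P^-1)%g (widen_ord le_rn j).
have g_inj : injective g by move=> i j /perm_inj /(congr1 val) /= /val_inj.
rewrite -[X in X <= _]card_ord -(card_imset _ g_inj); apply: subset_leq_card.
by apply/subsetP => _ /imsetP[j _ ->]; rewrite inE /g permKV /=.
Qed.

Lemma stable_swap n (pm pw : 'I_n -> {perm 'I_n}) (M : {perm 'I_n}) :
  stable pm pw M -> stable pw pm (M^-1)%g.
Proof.
move=> /forallP sM; apply/forallP => w; apply/forallP => m.
by move/forallP: (sM m) => /(_ w); rewrite /husband invgK andbC.
Qed.

Lemma k_range_swap n (pm pw : 'I_n -> {perm 'I_n}) k :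
  k_range pm pw k -> k_range pw pm k.
Proof. by case. Qed.

Section KRange.
Variables (n k : nat) (pm pw : 'I_n -> {perm 'I_n}).
Hypothesis hk : k_range pm pw k.
Variables m0 w0 : 'I_n.

(* The r men whom w = M m prefers to m have r distinct wives other than w, all
   ranked above w by their husbands; k-range puts their A-ranks below A(w) + 2k. *)
Lemma stable_PW_PM (M : {perm 'I_n}) m :
  stable pm pw M -> PW pw w0 m + 3 <= PM pm m0 (M m) + 3 * k.
Proof.
move=> sM; case: hk => kM kW; set w := M m; set r := PW pw w m.
set S := [set m' | pw w m' < r].
have card_S : r <= #|S| by apply/card_perm_lt/ltnW; rewrite /r /PW ltn_ord.
have S_wives m' : m' \in S -> M m' != w /\ PM pm m0 (M m') + 3 <= PM pm m0 w + 2 * k.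
  rewrite inE => lt_m'.
  have m'_neq_m : m' != m by apply: contraTneq lt_m' => ->; rewrite ltnn.
  have Mm'_neq_w : M m' != w by rewrite (inj_eq perm_inj).
  split=> //; have : PM pm m' (M m') < PM pm m' w.
    by apply: (stable_man_prefers sM); rewrite /w husband_perm.
  by have := kM (M m') m0 m'; have := kM w m' m0; lia.
have card_T : #|w |: (M @: S)| = #|S|.+1.
  have w_notin : w \notin M @: S.
    by apply/imsetP => -[m' /S_wives[/eqP Mm'_neq _] w_eq]; apply: Mm'_neq.
  by rewrite cardsU1 card_imset ?w_notin ?add1n //; apply: perm_inj.
have : w |: (M @: S) \subset window (PM pm m0) 0 (PM pm m0 w + 2 * k - 1).
  apply/subsetP => _ /setU1P[-> | /imsetP[m' /S_wives[_ le_m'] ->]]; rewrite inE /=.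
    by have := kM w m m; lia.
  by lia.
move/subset_leq_card/leq_trans/(_ (card_window _ _ (@PM_inj _ pm m0))).
by rewrite card_T; have := kW m w0 w; rewrite -/r; lia.
Qed.

End KRange.

Lemma stable_PM_PW n k (pm pw : 'I_n -> {perm 'I_n}) m0 w0 (M : {perm 'I_n}) m :
  k_range pm pw k -> stable pm pw M -> PM pm m0 (M m) + 3 <= PW pw w0 m + 3 * k.
Proof.
move=> hk sM; have := stable_PW_PM (k_range_swap hk) w0 m0 (M m) (stable_swap sM).
by rewrite permK; apply.
Qed.

(** * The path decomposition *)

Lemma pathwidth_le_of_bags (T : finType) (V : T -> Prop) (E : T -> T -> Prop) N p
    (bag : nat -> {set T}) :
  (forall t v, v \in bag t -> V v) ->
  (forall v, V v -> exists2 t, t < N & v \in bag t) ->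
  (forall u v, V u -> V v -> E u v -> exists2 t, t < N & (u \in bag t) && (v \in bag t)) ->
  (forall i j l v, i <= j <= l -> v \in bag i -> v \in bag l -> v \in bag j) ->
  (forall t, #|bag t| <= p.+1) ->
  pathwidth_le V E p.
Proof.
move=> bagV cover_V cover_E bag_interval card_bag.
exists [seq bag t | t <- iota 0 N]; split; last by move=> _ /mapP[t _ ->].
have nth_bags i : i < N -> nth set0 [seq bag t | t <- iota 0 N] i = bag i.
  by move=> lt_iN; rewrite (nth_map 0) ?size_iota // nth_iota.
split.
- by move=> _ /mapP[t _ ->]; apply: bagV.
- move=> v /cover_V[t lt_tN v_t]; exists (bag t) => //.
  by apply: map_f; rewrite mem_iota.
- move=> u v Vu Vv /(cover_E _ _ Vu Vv)[t lt_tN uv_t]; exists (bag t) => //.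
  by apply: map_f; rewrite mem_iota.
- move=> i j l le_ij le_jl; rewrite size_map size_iota => lt_lN.
  have lt_jN := leq_ltn_trans le_jl lt_lN; have lt_iN := leq_ltn_trans le_ij lt_jN.
  rewrite !nth_bags //; apply/subsetP => v /setIP[v_i v_l].
  by apply: bag_interval v_i v_l; rewrite le_ij le_jl.
Qed.

Definition is_rotationb n (pm pw : 'I_n -> {perm 'I_n}) R : bool :=
  if excluded_middle_informative (is_rotation pm pw R) then true else false.

Lemma is_rotationbP n (pm pw : 'I_n -> {perm 'I_n}) R :
  reflect (is_rotation pm pw R) (is_rotationb pm pw R).
Proof. by rewrite /is_rotationb; case: excluded_middle_informative; constructor. Qed.

Section Bags.
Variables (n k : nat) (pm pw : 'I_n -> {perm 'I_n}).
Hypothesis hk : k_range pm pw k.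
Variables m0 w0 : 'I_n.
Local Notation A w := (PM pm m0 w).
(* If a man ranks x <= y <= z, k-range gives A(x) <= A(y) + 2k - 2 and
   A(y) <= A(z) + 2k - 2; span is chosen so that bag (A(y) - (2k - 2)) then
   sees x, y and z. *)
Local Notation span := (4 * k - 4).

Lemma k_gt0 : 0 < k.
Proof. by case: hk => /(_ m0 m0 m0); rewrite -ltn_subLR ?subnn. Qed.

Definition bag t : {set {set 'I_n * 'I_n}} :=
  [set R | [&& is_rotationb pm pw R, [exists p in R, A p.2 <= t + span]
                                    & [exists p in R, t <= A p.2]]].

Lemma bag_rotation t R : R \in bag t -> is_rotation pm pw R.
Proof. by rewrite inE => /and3P[/is_rotationbP]. Qed.

Lemma bag_interval i j l R : i <= j <= l -> R \in bag i -> R \in bag l -> R \in bag j.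
Proof.
case/andP=> le_ij le_jl; rewrite !inE => /and3P[-> /exists_inP[p p_R le_p] _].
case/and3P=> _ _ /exists_inP[q q_R le_q]; apply/and3P; split=> //.
  by apply/exists_inP; exists p; rewrite // (leq_trans le_p) ?leq_add2r.
by apply/exists_inP; exists q; rewrite // (leq_trans le_jl).
Qed.

Lemma rotation_bag R : is_rotation pm pw R -> exists2 t, t < n & R \in bag t.
Proof.
move=> /[dup] /rotationP[M [ms [_ /exposed_mem[m m_ms] ->]]] rot_R.
exists (A (M m)); first by rewrite /PM ltn_ord.
rewrite inE; apply/and3P; split; first exact/is_rotationbP.
  by apply/exists_inP; exists (m, M m); rewrite ?imset_f //= leq_addr.
by apply/exists_inP; exists (m, M m); rewrite ?imset_f.
Qed.

(* Along a rotation cycle A-ranks drop by at most 2k - 2 < span per step. *)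
Lemma bag_window t R : R \in bag t -> exists2 p, p \in R & t <= A p.2 <= t + span.
Proof.
rewrite inE => /and3P[/is_rotationbP /rotationP[M [ms [sM Ems ->]]]].
case/exists_inP=> _ /imsetP[m1 m1_ms ->] /= le_m1.
case/exists_inP=> _ /imsetP[m2 m2_ms ->] /= le_m2.
have [/exists_inP // | /exists_inPn out_window] :=
  boolP [exists p in rotset M ms, t <= A p.2 <= t + span].
have outside m : m \in ms -> t <= A (M m) -> t + span < A (M m).
  by move=> m_ms; move: (out_window _ (imset_f _ m_ms)) => /=; lia.
have step m : m \in ms -> t + span < A (M m) -> t + span < A (M (path.next ms m)).
  move=> m_ms high_m; apply: outside; first by rewrite mem_next.
  have /nextP[lt_next _ _] := exposed_next Ems m_ms.
  by case: hk => kM _; have := kM (M m) m0 m; have := kM (M (path.next ms m)) m m0; lia.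
have := next_invariant (exposed_uniq Ems) m2_ms (outside m2 m2_ms le_m2) step m1_ms.
by rewrite ltnNge le_m1.
Qed.

Definition pairs t : {set 'I_n * 'I_n} :=
  setX (window (PW pw w0) (t - (3 * k - 3)) (span + 1 + 2 * (3 * k - 3)))
       (window (PM pm m0) t (span + 1)).

Lemma bag_pairs t R : R \in bag t -> exists2 p, p \in R & p \in pairs t.
Proof.
move=> /[dup] R_bag /bag_window[p p_R /andP[le_t le_span]]; exists p => //.
have /rotationP[M [ms [sM _ eqR]]] := bag_rotation R_bag.
move: p_R le_t le_span; rewrite eqR => /imsetP[m _ ->] /= le_t le_span.
have := stable_PW_PM hk m0 w0 m sM; have := stable_PM_PW m0 w0 m hk sM.
by rewrite !inE /=; lia.
Qed.

Lemma card_bag t : #|bag t| <= (50 * k ^ 2).+1.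
Proof.
pose f R := odflt (m0, w0) [pick p in R :&: pairs t].
have fP R : R \in bag t -> f R \in R :&: pairs t.
  rewrite /f; case: pickP => [p // | none] /bag_pairs[p p_R p_pairs].
  by move: (none p); rewrite inE p_R p_pairs.
have f_inj : {in bag t &, injective f}.
  move=> R1 R2 R1_bag R2_bag f12.
  have /setIP[f_R1 _] := fP R1 R1_bag; have /setIP[f_R2 _] := fP R2 R2_bag.
  by apply: rotation_pair_eq (bag_rotation R1_bag) (bag_rotation R2_bag) f_R1 _; rewrite f12.
rewrite -(card_in_imset f_inj).
have /subset_leq_card/leq_trans-> // : f @: bag t \subset pairs t.
  by apply/subsetP => _ /imsetP[R R_bag ->]; case/setIP: (fP R R_bag).
rewrite cardsX; apply: leq_trans (leq_mul (card_window _ _ (@PW_inj _ pw w0))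
                                          (card_window _ _ (@PM_inj _ pm m0))) _.
by have := k_gt0; nia.
Qed.

Lemma interleaved_bag R1 R2 : is_rotation pm pw R1 -> is_rotation pm pw R2 ->
  interleaved pm R1 R2 -> exists2 t, t < n & (R1 \in bag t) && (R2 \in bag t).
Proof.
move=> rot_R1 rot_R2 [m [x [y [z [le_xy le_yz]]]]].
case/imsetP=> px px_R1 x_eq /imsetP[pz pz_R1 z_eq] /imsetP[py py_R2 y_eq]; subst x y z.
exists (A py.2 - (2 * k - 2)); first by have := ltn_ord (pm m0 py.2); rewrite /PM; lia.
have [kM _] := hk.
have A_x : A px.2 <= A py.2 + (2 * k - 2).
  by have := kM px.2 m0 m; have := kM py.2 m m0; lia.
have A_z : A py.2 <= A pz.2 + (2 * k - 2).
  by have := kM py.2 m0 m; have := kM pz.2 m m0; lia.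
rewrite !inE; apply/andP; split; apply/and3P; split; try exact/is_rotationbP;
  apply/exists_inP; [exists px | exists pz | exists py | exists py] => //; lia.
Qed.

Lemma hasse_edge_bag R1 R2 : hasse_edge pm pw R1 R2 ->
  exists2 t, t < n & (R1 \in bag t) && (R2 \in bag t).
Proof.
have cover_bag R R' : rot_cover pm pw R R' ->
    exists2 t, t < n & (R \in bag t) && (R' \in bag t).
  move=> /[dup] [[rot_R [rot_R' _]]] /cover_interleaved[] /interleaved_bag; first exact.
  by case/(_ rot_R' rot_R) => t lt_tn; exists t; rewrite // andbC.
by case=> /cover_bag[t lt_tn R12]; exists t; rewrite // andbC.
Qed.

End Bags.

Theorem theorem7p9 (n k : nat) (pm pw : 'I_n -> {perm 'I_n}) :
  k_range pm pw k ->
  pathwidth_le (is_rotation pm pw) (hasse_edge pm pw) (50 * k ^ 2).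
Proof.
case: n pm pw => [|n] pm pw hk.
  have no_rotation R : ~ is_rotation pm pw R.
    by case/rotationP=> M [ms [_ /exposed_mem[[]]]].
  apply: (pathwidth_le_of_bags (N := 0) (bag := fun=> set0)).
  - by move=> t R; rewrite inE.
  - by move=> R /no_rotation.
  - by move=> R1 R2 /no_rotation.
  - by move=> i j l R _; rewrite inE.
  - by move=> t; rewrite cards0.
apply: (pathwidth_le_of_bags (N := n.+1) (bag := bag k pm pw ord0)).
- exact: bag_rotation.
- exact: rotation_bag.
- by move=> R1 R2 _ _; apply: (hasse_edge_bag hk ord0).
- exact: bag_interval.
- exact: card_bag hk ord0 ord0.
Qed.
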